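(* Let $(\mathbf{X},\mathcal{F},\mu)$ be a probability space with a reflexive symmetric relation $\approx$ such that $D(x)=\{y:y\approx x\}\in\mathcal{F}$ for all $x$ and $\inf_{x\in\mathbf{X}}\mu(D(x))>0$. Let $\Omega=\{\Omega_1,\dots,\Omega_m\}$ be a partition of $\mathbf{X}$ into measurable sets with $\mu(\Omega_i)>0$ such that $x\approx y$ implies $x,y$ lie in the same $\Omega_i$; for $x\in\mathbf{X}$ let $i(x)$ be the index with $x\in\Omega_{i(x)}$, and set $\bar k(\Omega)=\sup_{x\in\mathbf{X}}\mu(\Omega_{i(x)})/\mu(D(x))$. Let $R=\{R_1,\dots,R_m\}$ be a measurable partition of $\mathbf{X}$ with label function $\ell(x)=c$ iff $x\in R_c$, and recall rates $\rho_i=\mu(R_i\cap\Omega_i)/\mu(\Omega_i)$. If $\rho_i\geq\underline\rho$ for all $i$, where $(1-\underline\rho)\,\bar k(\Omega)<1$, then every misclassified input $x$ (i.e. $\ell(x)\neq i(x)$) satisfies $\mu(D(x)\setminus R_{\ell(x)})>0$; in particular there exists $y\approx x$ with $\ell(y)\neq\ell(x)$.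
   Context: A classifier has hyper-sensitive behavior if every misclassified input is an adversarial Doppelgänger, i.e. has some $y\approx x$ with a different label. *)

From HB Require Import structures.
From mathcomp Require Import all_boot all_order all_algebra.
From mathcomp Require Import all_classical all_reals all_analysis.
Set Implicit Arguments. Unset Strict Implicit. Unset Printing Implicit Defensive.
Import Order.TTheory GRing.Theory Num.Theory.
Local Open Scope classical_set_scope.
Local Open Scope ring_scope.

Definition dop (T : Type) (approx : T -> T -> Prop) (x : T) : set T :=
  [set y | approx y x].

Definition cell (T : Type) (m : nat) (f : T -> 'I_m) (i : 'I_m) : set T :=
  f @^-1` [set i].

Definition recall_rate d (T : measurableType d) (R : realType)
  (mu : probability T R) (m : nat) (iof ell : T -> 'I_m) (i : 'I_m) : R :=
  fine (mu (cell ell i `&` cell iof i)) / fine (mu (cell iof i)).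

Definition kbar d (T : measurableType d) (R : realType)
  (mu : probability T R) (approx : T -> T -> Prop) (m : nat) (iof : T -> 'I_m)
  : \bar R :=
  ereal_sup [set ((fine (mu (cell iof (iof x))) / fine (mu (dop approx x)))%:E)%E
            | x in [set: T]].

From HB Require Import structures.
From mathcomp Require Import all_boot all_order all_algebra.
From mathcomp Require Import all_classical all_reals all_analysis.
From mathcomp Require Import lra.
Set Implicit Arguments. Unset Strict Implicit. Unset Printing Implicit Defensive.
Import Order.TTheory GRing.Theory Num.Theory.
Local Open Scope classical_set_scope.
Local Open Scope ring_scope.

(* Let i be the cell of x and rho_i its recall.  Every Doppelgänger of x lies
   in Omega_i, and the part of Omega_i outside R_i has measure
   (1 - rho_i) mu(Omega_i) <= (1 - rho) kbar mu(D(x)) < mu(D(x)).  Hence D(x)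
   meets R_i in positive measure, and R_i is disjoint from R_(ell x) because x
   is misclassified. *)

Lemma measure_setI_gt0 d (T : measurableType d) (R : realType)
    (mu : {measure set T -> \bar R}) (O A B : set T) :
  measurable O -> measurable A -> measurable B -> B `<=` O ->
  (mu (O `\` A) < mu B)%E -> (0 < mu (B `&` A))%E.
Proof.
move=> mO mA mB BO OA_lt_B; rewrite lt_neqAle measure_ge0 andbT.
apply/eqP => BA0.
have mBA : measurable (B `&` A) by exact: measurableI.
have mOA : measurable (O `\` A) by exact: measurableD.
have : (mu B <= mu (B `&` A) + mu (O `\` A))%E.
  apply: le_trans (measureU2 _ mBA mOA).
  apply: le_measure; rewrite ?inE //; first exact: measurableU.
  by move=> y By; have [Ay|nAy] := pselect (A y); [left | right; split; auto].
by rewrite -BA0 add0e => /(lt_le_trans OA_lt_B); rewrite ltxx.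
Qed.

Lemma fine_measure_setD_le d (T : measurableType d) (R : realType)
    (mu : probability T R) (O A : set T) (rho : R) :
  measurable O -> measurable A -> 0 < fine (mu O) ->
  rho <= fine (mu (A `&` O)) / fine (mu O) ->
  fine (mu (O `\` A)) <= (1 - rho) * fine (mu O).
Proof.
move=> mO mA O_gt0; rewrite ler_pdivlMr // => recall_ge.
rewrite measureD ?fineB ?fin_num_measure ?ltey_eq ?fin_num_measure //;
  last exact: measurableI.
by rewrite setIC; lra.
Qed.

Lemma mulr_lt_of_ratio_le (R : realType) (a b t : R) (k : \bar R) :
  0 <= a -> 0 < b -> ((a / b)%:E <= k)%E -> (t%:E * k < 1)%E -> t * a < b.
Proof.
move=> a_ge0 b_gt0 ratio_le tk_lt1.
have [t_le0|t_gt0] := lerP t 0; first by apply: le_lt_trans b_gt0; nra.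
have : t * (a / b) < 1.
  by rewrite -lte_fin EFinM; apply: le_lt_trans tk_lt1; rewrite lee_pmul2l.
by rewrite mulrA ltr_pdivrMr // mul1r.
Qed.

Section Doppelgangers.
Variables (d : measure_display) (T : measurableType d) (R : realType).
Variables (mu : probability T R) (approx : T -> T -> Prop).
Variables (m : nat) (iof : T -> 'I_m).

Lemma dop_sub_cell x :
  (forall y z, approx y z -> iof y = iof z) ->
  dop approx x `<=` cell iof (iof x).
Proof. by move=> approx_cell y /approx_cell. Qed.

Lemma ratio_le_kbar x :
  ((fine (mu (cell iof (iof x))) / fine (mu (dop approx x)))%:E
    <= kbar mu approx iof)%E.
Proof. by apply: ereal_sup_ubound; exists x. Qed.

End Doppelgangers.

Theorem mainTheorem14 (d : measure_display) (T : measurableType d) (R : realType)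
  (mu : probability T R) (approx : T -> T -> Prop)
  (approx_refl : forall x, approx x x)
  (approx_sym : forall x y, approx x y -> approx y x)
  (D_meas : forall x, measurable (dop approx x))
  (D_inf : (0 < ereal_inf [set mu (dop approx x) | x in [set: T]])%E)
  (m : nat) (iof : T -> 'I_m)
  (Omega_meas : forall i, measurable (cell iof i))
  (Omega_pos : forall i, (0 < mu (cell iof i))%E)
  (approx_cell : forall x y, approx x y -> iof x = iof y)
  (ell : T -> 'I_m)
  (R_meas : forall c, measurable (cell ell c))
  (rho_low : R)
  (rho_ge : forall i, rho_low <= recall_rate mu iof ell i)
  (cond : ((1 - rho_low)%:E * kbar mu approx iof < 1)%E) :
  forall x, ell x <> iof x ->
    (0 < mu (dop approx x `\` cell ell (ell x)))%E /\
    (exists y, approx y x /\ ell y <> ell x).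
Proof.
move=> x misclassified.
set D := dop approx x; set Om := cell iof (iof x); set Ri := cell ell (iof x).
have mD : measurable D := D_meas x.
have mOm : measurable Om := Omega_meas (iof x).
have mRi : measurable Ri := R_meas (iof x).
have finK A : measurable A -> (fine (mu A))%:E = mu A.
  by move=> mA; rewrite fineK ?fin_num_measure.
have D_gt0 : 0 < fine (mu D).
  rewrite -lte_fin finK //; apply: lt_le_trans D_inf _.
  by apply: ereal_inf_lbound; exists x.
have Om_gt0 : 0 < fine (mu Om) by rewrite -lte_fin finK //; exact: Omega_pos.
have outside_lt_D : (mu (Om `\` Ri) < mu D)%E.
  rewrite -(finK _ mD) -finK ?lte_fin; last exact: measurableD.
  apply: le_lt_trans (fine_measure_setD_le mOm mRi Om_gt0 (rho_ge (iof x))) _.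
  apply: (mulr_lt_of_ratio_le _ _ (ratio_le_kbar mu approx iof x) cond) => //.
  exact/fine_ge0/measure_ge0.
have DRi_gt0 : (0 < mu (D `&` Ri))%E.
  exact: (measure_setI_gt0 mOm mRi mD (dop_sub_cell approx_cell)).
have DRi_misfit y : (D `&` Ri) y -> approx y x /\ ell y <> ell x.
  by move=> [Dy Riy]; split => // ell_eq; apply: misclassified; rewrite -ell_eq.
split.
  apply: lt_le_trans DRi_gt0 _; apply: le_measure; rewrite ?inE.
  - exact: measurableI.
  - by apply: measurableD => //; exact: R_meas.
  by move=> y DRy; have [Dy ell_neq] := DRi_misfit y DRy; split.
have [y DRy] : D `&` Ri !=set0.
  by apply/set0P/negP => /eqP DRi0; move: DRi_gt0; rewrite DRi0 measure0 ltxx.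
by exists y; exact: DRi_misfit.
Qed.
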